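(* Let $(V,m)$ be a discrete measure space and $(b,c)$ a graph over $(V,m)$. The following are equivalent: (i) $Q^{(N)}\neq Q^{(D)}$, i.e. $D(Q^{(N)})/D(Q^{(D)})\neq\{0\}$; (ii) there exists $u\in D(Q^{(N)})$, $u\not\equiv0$, with $(\widetilde L+1)u=0$; (iii) there exists $u\in D(Q^{(N)})\cap\ell^\infty(V)$, $u\not\equiv0$, with $(\widetilde L+1)u=0$.
   Context: $V$ is a finite or countably infinite set and $m:V\to(0,\infty)$; $(V,m)$ is a discrete measure space. $C(V)$ is the set of all functions $V\to\mathbb C$, $C_c(V)$ the finitely supported ones, and $\ell^2(V,m)$ carries $\langle u,v\rangle=\sum_x u(x)\overline{v(x)}m(x)$. A graph over $(V,m)$ is a pair $(b,c)$ with $c:V\to[0,\infty)$, $b:V\times V\to[0,\infty)$, $b(x,x)=0$, $b(x,y)=b(y,x)$, $\sum_y b(x,y)<\infty$. Let $\widetilde F=\{u\in C(V):\sum_y|b(x,y)u(y)|<\infty\ \forall x\}$ and $\widetilde L u(x)=\frac{1}{m(x)}\sum_y b(x,y)(u(x)-u(y))+\frac{c(x)}{m(x)}u(x)$ for $u\in\widetilde F$. $Q^{(N)}$ is the form on $\ell^2(V,m)$ with domain $D(Q^{(N)})=\{u\in\ell^2(V,m):\frac12\sum_{x,y}b(x,y)|u(x)-u(y)|^2+\sum_x c(x)|u(x)|^2<\infty\}$ and $Q^{(N)}(u,v)=\frac12\sum_{x,y}b(x,y)(u(x)-u(y))\overline{(v(x)-v(y))}+\sum_x c(x)u(x)\overline{v(x)}$;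 it is non-negative, symmetric and closed, and $D(Q^{(N)})\subseteq\widetilde F$. $Q^{(D)}$ is the closure of the restriction of $Q^{(N)}$ to $C_c(V)$. *)

From Stdlib Require Import Reals List.
Import ListNotations.
Open Scope R_scope.

(** Complex numbers as pairs (real part, imaginary part). *)
Definition Cplx : Type := (R * R)%type.
Definition C0 : Cplx := (0, 0).
Definition Cnorm2 (z : Cplx) : R := fst z * fst z + snd z * snd z.
Definition Cabs (z : Cplx) : R := sqrt (Cnorm2 z).
Definition Csub (z w : Cplx) : Cplx := (fst z - fst w, snd z - snd w).

Definition fsum {T : Type} (f : T -> R) (l : list T) : R :=
  fold_right (fun x acc => f x + acc) 0 l.

(** Unconditional summation of a family indexed by an arbitrary type:
    the net of finite (duplicate-free) partial sums converges to s. *)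
Definition has_sum {T : Type} (f : T -> R) (s : R) : Prop :=
  forall eps, 0 < eps ->
    exists l0 : list T, NoDup l0 /\
      forall l : list T, NoDup l -> incl l0 l -> Rabs (fsum f l - s) < eps.

Definition summable {T : Type} (f : T -> R) : Prop := exists s, has_sum f s.

Section Graph.
Context {V : Type} (m : V -> R) (b : V -> V -> R) (c : V -> R).

Definition in_l2 (u : V -> Cplx) : Prop :=
  summable (fun x => Cnorm2 (u x) * m x).

(** the two pieces of the energy  (1/2)Σ b|u(x)-u(y)|^2 + Σ c|u|^2 *)
Definition edge_energy (u : V -> Cplx) : V * V -> R :=
  fun p => b (fst p) (snd p) * Cnorm2 (Csub (u (fst p)) (u (snd p))).
Definition pot_energy (u : V -> Cplx) : V -> R :=
  fun x => c x * Cnorm2 (u x).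

Definition DQN (u : V -> Cplx) : Prop :=
  in_l2 u /\ summable (edge_energy u) /\ summable (pot_energy u).

Definition formnorm2_lt (w : V -> Cplx) (eps : R) : Prop :=
  exists s1 s2 s3,
    has_sum (edge_energy w) s1 /\ has_sum (pot_energy w) s2 /\
    has_sum (fun x => Cnorm2 (w x) * m x) s3 /\
    (1/2) * s1 + s2 + s3 < eps.

Definition finsupp (phi : V -> Cplx) : Prop :=
  exists l : list V, forall x, ~ In x l -> phi x = C0.

Definition DQD (u : V -> Cplx) : Prop :=
  DQN u /\
  forall eps, 0 < eps ->
    exists phi, finsupp phi /\ formnorm2_lt (fun x => Csub (u x) (phi x)) eps.

Definition Ftilde (u : V -> Cplx) : Prop :=
  forall x, summable (fun y => Rabs (b x y) * Cabs (u y)).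

Definition Lt_plus1_zero (u : V -> Cplx) : Prop :=
  Ftilde u /\
  forall x, exists sr si,
    has_sum (fun y => b x y * (fst (u x) - fst (u y))) sr /\
    has_sum (fun y => b x y * (snd (u x) - snd (u y))) si /\
    (sr + c x * fst (u x)) / m x + fst (u x) = 0 /\
    (si + c x * snd (u x)) / m x + snd (u x) = 0.

Definition in_linfty (u : V -> Cplx) : Prop :=
  exists M, forall x, Cabs (u x) <= M.

Definition not_identically_zero (u : V -> Cplx) : Prop := exists x, u x <> C0.

End Graph.

(* The form inner product of Q^(N) + 1 on real functions is the l^2 inner product of the
   coordinates sqrt (b(x,y)/2) (f x - f y) and sqrt (c x + m x) f x, and the discrete Green formula
   says that pairing f with the point mass at x gives m(x) ((L~ + 1) f)(x).  Hence the solutions of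
   (L~ + 1) u = 0 in D(Q^(N)) are exactly the vectors orthogonal to C_c(V), and such a vector lying
   in the closure D(Q^(D)) of C_c(V) vanishes: (ii) => (i).
   Conversely, if u is not in D(Q^(D)), neither is its real or imaginary part, nor (since the
   truncations converge in form norm) a truncation v of that part at some level n.  A minimizing
   sequence for the distance from v to C_c(V) can be clipped at n; it is Cauchy by the
   parallelogram law, and its pointwise limit is a nonzero solution bounded by n: (i) => (iii). *)

From Stdlib Require Import Reals Lra Lia Psatz List Permutation.
From Stdlib Require Import Classical ClassicalEpsilon FunctionalExtensionality.
Import ListNotations.
Open Scope R_scope.

(** * Unconditional summation *)

Section Summation.
Context {T : Type}.

Lemma fsum_app (f : T -> R) l1 l2 : fsum f (l1 ++ l2) = fsum f l1 + fsum f l2.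
Proof. induction l1; simpl; [lra | rewrite IHl1; lra]. Qed.

Lemma fsum_perm (f : T -> R) l1 l2 : Permutation l1 l2 -> fsum f l1 = fsum f l2.
Proof. induction 1; simpl; lra. Qed.

Lemma fsum_plus (f g : T -> R) l : fsum (fun x => f x + g x) l = fsum f l + fsum g l.
Proof. induction l; simpl; lra. Qed.

Lemma fsum_scal k (f : T -> R) l : fsum (fun x => k * f x) l = k * fsum f l.
Proof. induction l; simpl; [lra | rewrite IHl; ring]. Qed.

Lemma fsum_ge0 (f : T -> R) l : (forall x, 0 <= f x) -> 0 <= fsum f l.
Proof. intros H; induction l; simpl; [lra | specialize (H a); lra]. Qed.

Lemma fsum_le (f g : T -> R) l : (forall x, f x <= g x) -> fsum f l <= fsum g l.
Proof. intros H; induction l; simpl; [lra | specialize (H a); lra]. Qed.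

Lemma fsum_eq0 (f : T -> R) l : (forall x, In x l -> f x = 0) -> fsum f l = 0.
Proof. induction l; simpl; intros H; auto. rewrite H, IHl; auto; lra. Qed.

Lemma fsum_ge_term (f : T -> R) l i : (forall x, 0 <= f x) -> In i l -> f i <= fsum f l.
Proof.
  intros H; induction l as [|a l IH]; simpl; [tauto|]. intros [<-|Hi].
  - pose proof (fsum_ge0 f l H); lra.
  - specialize (IH Hi); specialize (H a); lra.
Qed.

Lemma NoDup_incl_perm_app (l l' : list T) : NoDup l -> NoDup l' -> incl l l' ->
  exists r, Permutation l' (l ++ r).
Proof.
  revert l'; induction l as [|a l IH]; intros l' Hl Hl' Hinc.
  - exists l'; apply Permutation_refl.
  - assert (Ha : In a l') by (apply Hinc; simpl; auto).
    destruct (in_split _ _ Ha) as [l1 [l2 ->]].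
    inversion Hl; subst.
    destruct (IH (l1 ++ l2)) as [r Hr]; auto.
    + eapply NoDup_remove_1; eauto.
    + intros x Hx. assert (Hx' : In x (l1 ++ a :: l2)) by (apply Hinc; simpl; auto).
      apply in_app_or in Hx'. apply in_or_app. simpl in Hx'.
      destruct Hx' as [H|[H|H]]; auto. subst; contradiction.
    + exists r. eapply perm_trans; [apply Permutation_sym, Permutation_middle|].
      apply perm_skip; auto.
Qed.

Lemma NoDup_cover (l : list T) : exists l', NoDup l' /\ incl l l'.
Proof.
  induction l as [|a l [l' [H1 H2]]].
  - exists []; split; [constructor | intros x []].
  - destruct (classic (In a l')) as [Hi|Hi].
    + exists l'; split; auto. intros x [<-|H]; auto.
    + exists (a :: l'); split; [constructor; auto|]. intros x [<-|H]; simpl; auto.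
Qed.

Lemma NoDup_cover2 (l1 l2 : list T) : exists l, NoDup l /\ incl l1 l /\ incl l2 l.
Proof.
  destruct (NoDup_cover (l1 ++ l2)) as [l [Hl Hinc]].
  exists l; repeat split; auto; intros x Hx; apply Hinc, in_or_app; auto.
Qed.

Lemma fsum_le_incl (f : T -> R) l l' : (forall x, 0 <= f x) -> NoDup l -> NoDup l' -> incl l l' ->
  fsum f l <= fsum f l'.
Proof.
  intros Hf H1 H2 H3. destruct (NoDup_incl_perm_app l l' H1 H2 H3) as [r Hr].
  rewrite (fsum_perm f _ _ Hr), fsum_app. pose proof (fsum_ge0 f r Hf); lra.
Qed.

Lemma has_sum_ext (f g : T -> R) s : (forall x, f x = g x) -> has_sum f s -> has_sum g s.
Proof. intros H. replace g with f; auto. apply functional_extensionality; auto. Qed.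

Lemma has_sum_unique (f : T -> R) a b : has_sum f a -> has_sum f b -> a = b.
Proof.
  intros Ha Hb. apply NNPP; intro Hne.
  set (e := Rabs (a - b) / 2).
  assert (He : 0 < e) by (unfold e; pose proof (Rabs_pos_lt (a - b) ltac:(lra)); lra).
  destruct (Ha e He) as [la [_ Ha']], (Hb e He) as [lb [_ Hb']].
  destruct (NoDup_cover2 la lb) as [l [Hl [Hla Hlb]]].
  specialize (Ha' l Hl Hla); specialize (Hb' l Hl Hlb).
  unfold e in *; split_Rabs; lra.
Qed.

Lemma has_sum_plus (f g : T -> R) a b :
  has_sum f a -> has_sum g b -> has_sum (fun x => f x + g x) (a + b).
Proof.
  intros Ha Hb eps He.
  destruct (Ha (eps/2)) as [la [_ Ha']]; [lra|]. destruct (Hb (eps/2)) as [lb [_ Hb']]; [lra|].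
  destruct (NoDup_cover2 la lb) as [l0 [Hl0 [Hla Hlb]]].
  exists l0; split; auto. intros l Hl Hi.
  specialize (Ha' l Hl (incl_tran Hla Hi)); specialize (Hb' l Hl (incl_tran Hlb Hi)).
  rewrite fsum_plus. split_Rabs; lra.
Qed.

Lemma has_sum_scal (f : T -> R) k s : has_sum f s -> has_sum (fun x => k * f x) (k * s).
Proof.
  intros Hs eps He.
  assert (Hk : 0 < Rabs k + 1) by (pose proof (Rabs_pos k); lra).
  destruct (Hs (eps / (Rabs k + 1))) as [l0 [Hl0 H0]]; [apply Rdiv_lt_0_compat; lra|].
  exists l0; split; auto. intros l Hl Hi. rewrite fsum_scal.
  replace (k * fsum f l - k * s) with (k * (fsum f l - s)) by ring. rewrite Rabs_mult.
  specialize (H0 l Hl Hi).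
  apply Rle_lt_trans with (Rabs k * (eps / (Rabs k + 1))).
  - apply Rmult_le_compat_l; [apply Rabs_pos | lra].
  - assert (eps / (Rabs k + 1) * (Rabs k + 1) = eps) by (field; lra).
    pose proof (Rabs_pos k). nra.
Qed.

Lemma has_sum_minus (f g : T -> R) a b :
  has_sum f a -> has_sum g b -> has_sum (fun x => f x - g x) (a - b).
Proof.
  intros Ha Hb. apply (has_sum_scal g (-1)) in Hb.
  replace (a - b) with (a + -1 * b) by ring.
  eapply has_sum_ext; [|apply has_sum_plus; eauto]. intros; simpl; ring.
Qed.

Lemma has_sum_le (f g : T -> R) a b : (forall x, f x <= g x) -> has_sum f a -> has_sum g b -> a <= b.
Proof.
  intros H Ha Hb. apply Rnot_lt_le; intro Hlt.
  destruct (Ha ((a-b)/2)) as [la [_ Ha']]; [lra|]. destruct (Hb ((a-b)/2)) as [lb [_ Hb']]; [lra|].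
  destruct (NoDup_cover2 la lb) as [l [Hl [Hla Hlb]]].
  specialize (Ha' l Hl Hla); specialize (Hb' l Hl Hlb).
  pose proof (fsum_le f g l H). split_Rabs; lra.
Qed.

Lemma fsum_le_has_sum (f : T -> R) s l :
  (forall x, 0 <= f x) -> has_sum f s -> NoDup l -> fsum f l <= s.
Proof.
  intros Hf Hs Hl. apply Rnot_lt_le; intro Hlt.
  destruct (Hs (fsum f l - s)) as [l0 [_ H0]]; [lra|].
  destruct (NoDup_cover2 l0 l) as [l' [Hl' [H1 H2]]].
  specialize (H0 l' Hl' H1). pose proof (fsum_le_incl f l l' Hf Hl Hl' H2).
  split_Rabs; lra.
Qed.

Lemma has_sum_le_fsum_bound (f : T -> R) s M :
  has_sum f s -> (forall l, NoDup l -> fsum f l <= M) -> s <= M.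
Proof.
  intros Hs HM. apply Rnot_lt_le; intro Hlt.
  destruct (Hs (s - M)) as [l0 [Hl0 H0]]; [lra|].
  specialize (H0 l0 Hl0 (incl_refl _)); specialize (HM l0 Hl0). split_Rabs; lra.
Qed.

(* The sum is the supremum of the partial sums. *)
Lemma has_sum_of_bounded_ge0 (f : T -> R) M : (forall x, 0 <= f x) ->
  (forall l, NoDup l -> fsum f l <= M) -> exists s, has_sum f s /\ s <= M.
Proof.
  intros Hf HM.
  set (E := fun r => exists l, NoDup l /\ r = fsum f l).
  destruct (completeness E) as [s [Hub Hlub]].
  - exists M. intros r [l [Hl ->]]. auto.
  - exists 0, []. split; [constructor | reflexivity].
  - exists s. split.
    + intros eps He.
      assert (exists l0, NoDup l0 /\ s - eps < fsum f l0) as [l0 [Hl0 Hlt]].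
      { apply NNPP; intro Hn. assert (s <= s - eps); [|lra].
        apply Hlub. intros r [l [Hl ->]]. apply Rnot_lt_le; intro. apply Hn. exists l; auto. }
      exists l0; split; auto. intros l Hl Hinc.
      assert (fsum f l <= s) by (apply Hub; exists l; auto).
      assert (fsum f l0 <= fsum f l) by (apply fsum_le_incl; auto).
      apply Rabs_def1; lra.
    + apply Hlub. intros r [l [Hl ->]]. auto.
Qed.

Lemma NoDup_app_notin (l r : list T) x : NoDup (l ++ r) -> In x l -> ~ In x r.
Proof.
  induction l as [|a l IH]; simpl; [tauto|]. intros Hn [<-|Hl]; inversion Hn; subst.
  - intro; apply H1, in_or_app; auto.
  - auto.
Qed.

Lemma has_sum_finite_support (f : T -> R) l :
  NoDup l -> (forall x, ~ In x l -> f x = 0) -> has_sum f (fsum f l).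
Proof.
  intros Hl Hz eps He. exists l; split; auto. intros l' Hl' Hi.
  destruct (NoDup_incl_perm_app l l' Hl Hl' Hi) as [r Hr].
  assert (Hnd : NoDup (l ++ r)) by (eapply Permutation_NoDup; eauto).
  rewrite (fsum_perm f _ _ Hr), fsum_app, (fsum_eq0 f r).
  - replace (fsum f l + 0 - fsum f l) with 0 by ring. rewrite Rabs_R0; lra.
  - intros x Hx. apply Hz. intro Hxl. eapply NoDup_app_notin; eauto.
Qed.

Lemma has_sum_zero : has_sum (fun _ : T => 0) 0.
Proof. apply (has_sum_finite_support (fun _ : T => 0) []); [constructor | auto]. Qed.

Lemma summable_plus (f g : T -> R) : summable f -> summable g -> summable (fun x => f x + g x).
Proof. intros [a Ha] [b Hb]; exists (a + b); apply has_sum_plus; auto. Qed.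

Lemma summable_scal (f : T -> R) k : summable f -> summable (fun x => k * f x).
Proof. intros [a Ha]; exists (k * a); apply has_sum_scal; auto. Qed.

Lemma summable_dom_ge0 (f g : T -> R) : (forall x, 0 <= g x <= f x) -> summable f -> summable g.
Proof.
  intros H [s Hs]. destruct (has_sum_of_bounded_ge0 g s) as [s' [Hs' _]].
  - intros x; apply H.
  - intros l Hl. apply Rle_trans with (fsum f l); [apply fsum_le; apply H|].
    apply fsum_le_has_sum; auto. intros x; specialize (H x); lra.
  - exists s'; auto.
Qed.

Lemma summable_dom (f g : T -> R) : (forall x, Rabs (g x) <= f x) -> summable f -> summable g.
Proof.
  intros H Hf.
  destruct (summable_dom_ge0 f (fun x => Rmax (g x) 0)) as [a Ha]; auto.
  { intros x; specialize (H x). unfold Rmax; destruct Rle_dec; split_Rabs; lra. }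
  destruct (summable_dom_ge0 f (fun x => Rmax (- g x) 0)) as [a' Ha']; auto.
  { intros x; specialize (H x). unfold Rmax; destruct Rle_dec; split_Rabs; lra. }
  exists (a - a'). eapply has_sum_ext; [|apply has_sum_minus; [exact Ha | exact Ha']].
  intros x; simpl. unfold Rmax. repeat destruct Rle_dec; lra.
Qed.

End Summation.

Section Reindex.
Context {A T : Type} (e : A -> T) (e_inj : forall x y, e x = e y -> x = y).

Definition preimage_list (y : T) : list A :=
  match excluded_middle_informative (exists x, e x = y) with
  | left H => [proj1_sig (constructive_indefinite_description _ H)]
  | right _ => []
  end.

Definition preimage_lists (l : list T) : list A := flat_map preimage_list l.

Lemma in_preimage_lists l x : In x (preimage_lists l) <-> In (e x) l.
Proof.
  unfold preimage_lists. rewrite in_flat_map. split.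
  - intros [y [Hy Hx]]. unfold preimage_list in Hx.
    destruct excluded_middle_informative; [|contradiction].
    destruct constructive_indefinite_description as [x' Hx']; simpl in Hx.
    destruct Hx as [<-|[]]. subst; auto.
  - intros H. exists (e x); split; auto. unfold preimage_list.
    destruct excluded_middle_informative as [H'|H'].
    + destruct constructive_indefinite_description as [x' Hx']; simpl. left; auto.
    + exfalso; eauto.
Qed.

Lemma NoDup_preimage_lists l : NoDup l -> NoDup (preimage_lists l).
Proof.
  induction l as [|y l IH]; intros Hl; simpl; [constructor|].
  inversion Hl; subst. unfold preimage_list at 1.
  destruct excluded_middle_informative as [H|H]; simpl; [|auto].
  destruct constructive_indefinite_description as [x Hx]; simpl. constructor; auto.
  rewrite in_preimage_lists. subst; auto.
Qed.

Lemma fsum_preimage_lists (F : T -> R) l : (forall y, ~ (exists x, e x = y) -> F y = 0) ->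
  fsum (fun x => F (e x)) (preimage_lists l) = fsum F l.
Proof.
  intros HF. induction l as [|y l IH]; simpl; auto.
  rewrite fsum_app. fold (preimage_lists l). rewrite IH.
  unfold preimage_list. destruct excluded_middle_informative as [H|H]; simpl.
  - destruct constructive_indefinite_description as [x Hx]; simpl. subst; ring.
  - rewrite HF; auto; ring.
Qed.

Lemma fsum_map (F : T -> R) l : fsum F (map e l) = fsum (fun x => F (e x)) l.
Proof. induction l; simpl; auto. rewrite IHl; auto. Qed.

Lemma has_sum_reindex (F : T -> R) s : (forall y, ~ (exists x, e x = y) -> F y = 0) ->
  has_sum (fun x => F (e x)) s -> has_sum F s.
Proof.
  intros HF Hs eps He. destruct (Hs eps He) as [la [Hla H]].
  exists (map e la). split; [apply FinFun.Injective_map_NoDup; auto|].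
  intros l Hl Hi. rewrite <- fsum_preimage_lists by auto. apply H.
  - apply NoDup_preimage_lists; auto.
  - intros x Hx. apply in_preimage_lists, Hi, in_map; auto.
Qed.

Lemma summable_comp_inj (F : T -> R) : (forall y, 0 <= F y) -> summable F -> summable (fun x => F (e x)).
Proof.
  intros Hp [s Hs]. destruct (has_sum_of_bounded_ge0 (fun x => F (e x)) s) as [s' [H _]]; auto.
  - intros l Hl. rewrite <- fsum_map. apply fsum_le_has_sum; auto.
    apply FinFun.Injective_map_NoDup; auto.
  - exists s'; auto.
Qed.

End Reindex.

Section SumType.
Context {A B : Type}.

Lemma has_sum_sum_type (F : A + B -> R) a b :
  has_sum (fun p => F (inl p)) a -> has_sum (fun x => F (inr x)) b -> has_sum F (a + b).
Proof.
  intros Ha Hb.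
  set (F1 := fun i : A + B => match i with inl p => F (inl p) | inr _ => 0 end).
  set (F2 := fun i : A + B => match i with inl _ => 0 | inr x => F (inr x) end).
  assert (H1 : has_sum F1 a).
  { apply (has_sum_reindex inl); [intros x y H; injection H; auto | | exact Ha].
    intros [p|x] Hn; simpl; auto. exfalso; eauto. }
  assert (H2 : has_sum F2 b).
  { apply (has_sum_reindex inr); [intros x y H; injection H; auto | | exact Hb].
    intros [p|x] Hn; simpl; auto. exfalso; eauto. }
  eapply has_sum_ext; [|apply has_sum_plus; [exact H1 | exact H2]].
  intros [p|x]; simpl; ring.
Qed.

Lemma has_sum_sum_type_split (F : A + B -> R) s : (forall i, 0 <= F i) -> has_sum F s ->
  exists a b, has_sum (fun p => F (inl p)) a /\ has_sum (fun x => F (inr x)) b /\ a + b = s.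
Proof.
  intros Hp Hs.
  destruct (summable_comp_inj inl (fun x y H => ltac:(injection H; auto)) F Hp (ex_intro _ s Hs)) as [a Ha].
  destruct (summable_comp_inj inr (fun x y H => ltac:(injection H; auto)) F Hp (ex_intro _ s Hs)) as [b Hb].
  exists a, b; repeat split; auto. eapply has_sum_unique; [apply has_sum_sum_type | exact Hs]; auto.
Qed.

End SumType.

(** * Square-summable families *)

Section SquareSummable.
Context {T : Type}.

(* Junk value: [sum_val f = 0] when [f] is not summable. *)
Definition sum_val (f : T -> R) : R :=
  match excluded_middle_informative (summable f) with
  | left H => proj1_sig (constructive_indefinite_description _ H)
  | right _ => 0
  end.

Lemma has_sum_val f : summable f -> has_sum f (sum_val f).
Proof.
  intros H. unfold sum_val. destruct excluded_middle_informative; [|contradiction].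
  destruct constructive_indefinite_description; simpl; auto.
Qed.

Lemma sum_val_eq f s : has_sum f s -> sum_val f = s.
Proof. intros H. eapply has_sum_unique; [apply has_sum_val; exists s|]; eauto. Qed.

Lemma sum_val_ge0 f : (forall x, 0 <= f x) -> 0 <= sum_val f.
Proof.
  intros H. unfold sum_val. destruct excluded_middle_informative as [Hs|]; [|lra].
  destruct constructive_indefinite_description as [s Hs']; simpl.
  eapply has_sum_le; [|apply has_sum_zero | exact Hs']. auto.
Qed.

Lemma sum_val_plus f g : summable f -> summable g ->
  sum_val (fun x => f x + g x) = sum_val f + sum_val g.
Proof. intros Hf Hg. apply sum_val_eq, has_sum_plus; apply has_sum_val; auto. Qed.

Lemma sum_val_scal f k : summable f -> sum_val (fun x => k * f x) = k * sum_val f.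
Proof. intros Hf. apply sum_val_eq, has_sum_scal, has_sum_val; auto. Qed.

Lemma sum_val_le f g : summable f -> summable g -> (forall x, f x <= g x) -> sum_val f <= sum_val g.
Proof. intros Hf Hg H. eapply has_sum_le; eauto; apply has_sum_val; auto. Qed.

Lemma fsum_le_sum_val f l : (forall x, 0 <= f x) -> summable f -> NoDup l -> fsum f l <= sum_val f.
Proof. intros; apply fsum_le_has_sum; auto; apply has_sum_val; auto. Qed.

Definition sq_summable (F : T -> R) := summable (fun i => F i * F i).
Definition ip (F G : T -> R) := sum_val (fun i => F i * G i).

Lemma summable_mul F G : sq_summable F -> sq_summable G -> summable (fun i => F i * G i).
Proof.
  intros HF HG. apply summable_dom with (fun i => / 2 * (F i * F i) + / 2 * (G i * G i)).
  - intros i. pose proof (Rle_0_sqr (F i + G i)); pose proof (Rle_0_sqr (F i - G i)).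
    unfold Rsqr in *. apply Rabs_le; split; lra.
  - apply summable_plus; apply summable_scal; auto.
Qed.

Lemma sq_summable_comb F G p q : sq_summable F -> sq_summable G ->
  sq_summable (fun i => p * F i + q * G i).
Proof.
  intros HF HG. pose proof (summable_mul F G HF HG) as HFG.
  apply (summable_scal _ (p * p)) in HF. apply (summable_scal _ (q * q)) in HG.
  apply (summable_scal _ (2 * p * q)) in HFG.
  destruct (summable_plus _ _ (summable_plus _ _ HF HG) HFG) as [s Hs]. exists s.
  eapply has_sum_ext; [|exact Hs]. intros; simpl; ring.
Qed.

Lemma sq_summable_zero : sq_summable (fun _ => 0).
Proof. exists 0. eapply has_sum_ext; [|apply has_sum_zero]. intros; simpl; ring. Qed.

Lemma ip_comm F G : ip F G = ip G F.
Proof. unfold ip. f_equal. apply functional_extensionality; intros; ring. Qed.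

Lemma ip_ge0 F : 0 <= ip F F.
Proof. apply sum_val_ge0. intros; nra. Qed.

Lemma ip_0r F : ip F (fun _ => 0) = 0.
Proof. unfold ip. apply sum_val_eq. eapply has_sum_ext; [|apply has_sum_zero]. intros; simpl; ring. Qed.

Lemma ip_linl F G H p q : sq_summable F -> sq_summable G -> sq_summable H ->
  ip (fun i => p * F i + q * G i) H = p * ip F H + q * ip G H.
Proof.
  intros HF HG HH. unfold ip.
  rewrite <- (sum_val_scal _ p), <- (sum_val_scal _ q), <- sum_val_plus
    by (try apply summable_scal; apply summable_mul; auto).
  f_equal. apply functional_extensionality; intros; ring.
Qed.

Lemma ip_linr F G H p q : sq_summable F -> sq_summable G -> sq_summable H ->
  ip H (fun i => p * F i + q * G i) = p * ip H F + q * ip H G.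
Proof. intros. rewrite ip_comm, ip_linl by auto. rewrite (ip_comm F), (ip_comm G); auto. Qed.

Lemma ip_comb F G p q r s : sq_summable F -> sq_summable G ->
  ip (fun i => p * F i + q * G i) (fun i => r * F i + s * G i)
  = p * r * ip F F + (p * s + q * r) * ip F G + q * s * ip G G.
Proof.
  intros HF HG. rewrite ip_linl by (try apply sq_summable_comb; auto).
  rewrite !ip_linr by auto. rewrite (ip_comm G F). ring.
Qed.

Lemma discriminant_le A B p : 0 <= B -> (forall t, 0 <= A - 2 * t * p + t * t * B) -> p * p <= A * B.
Proof.
  intros HB H. assert (HA := H 0).
  destruct (Req_dec B 0) as [HB0|HB0].
  - subst. destruct (Req_dec p 0) as [->|Hp]; [lra|].
    specialize (H ((A + 1) / (2 * p))).
    assert (2 * ((A + 1) / (2 * p)) * p = A + 1) by (field; auto). nra.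
  - specialize (H (p / B)).
    assert (E : A - 2 * (p / B) * p + p / B * (p / B) * B = (A * B - p * p) / B) by (field; lra).
    rewrite E in H. assert (0 < B) by lra.
    apply (Rmult_le_compat_r B) in H; [|lra].
    replace ((A * B - p * p) / B * B) with (A * B - p * p) in H by (field; lra). lra.
Qed.

Lemma cauchy_schwarz F G : sq_summable F -> sq_summable G -> ip F G * ip F G <= ip F F * ip G G.
Proof.
  intros HF HG. apply discriminant_le; [apply ip_ge0|]. intros t.
  replace (ip F F - 2 * t * ip F G + t * t * ip G G)
    with (ip (fun i => 1 * F i + - t * G i) (fun i => 1 * F i + - t * G i))
    by (rewrite ip_comb by auto; ring).
  apply ip_ge0.
Qed.

Lemma fsum_sq_cv (Fk : nat -> T -> R) G l : (forall i, Un_cv (fun k => Fk k i) (G i)) ->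
  Un_cv (fun k => fsum (fun i => Fk k i * Fk k i) l) (fsum (fun i => G i * G i) l).
Proof.
  intros H. induction l as [|a l IH]; simpl.
  - intros eps He. exists 0%nat. intros. unfold R_dist. rewrite Rminus_diag, Rabs_R0; lra.
  - apply CV_plus; auto. apply CV_mult; auto.
Qed.

Lemma fatou (Fk : nat -> T -> R) G M Mk : (forall k, sq_summable (Fk k)) ->
  (forall i, Un_cv (fun k => Fk k i) (G i)) ->
  (forall k, ip (Fk k) (Fk k) <= Mk k) -> Un_cv Mk M -> sq_summable G /\ ip G G <= M.
Proof.
  intros HL Hcv Hb HM.
  assert (Hfs : forall l, NoDup l -> fsum (fun i => G i * G i) l <= M).
  { intros l Hl. eapply Rle_cv_lim; [|apply fsum_sq_cv; exact Hcv | exact HM].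
    intros k. eapply Rle_trans; [|apply Hb]. apply fsum_le_sum_val; [intros; nra | apply HL | exact Hl]. }
  destruct (has_sum_of_bounded_ge0 (fun i => G i * G i) M (fun i => Rle_0_sqr (G i)) Hfs) as [s [Hs Hle]].
  split; [exists s; auto|]. unfold ip. rewrite (sum_val_eq _ _ Hs); auto.
Qed.

End SquareSummable.

Lemma exists_inf_ge0 (P : R -> Prop) : (exists r, P r) -> (forall r, P r -> 0 <= r) ->
  exists d, (forall r, P r -> d <= r) /\ (forall e, 0 < e -> exists r, P r /\ r < d + e).
Proof.
  intros [r0 Hr0] Hge.
  destruct (completeness (fun r => P (- r))) as [L [Hub Hlub]].
  - exists 0. intros r Hr. specialize (Hge _ Hr). lra.
  - exists (- r0). rewrite Ropp_involutive. auto.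
  - exists (- L). split.
    + intros r Hr. assert (- r <= L) by (apply Hub; rewrite Ropp_involutive; auto). lra.
    + intros e He. apply NNPP; intro Hn. assert (L <= L - e); [|lra].
      apply Hlub. intros r Hr. apply Rnot_lt_le; intro Hlt. apply Hn. exists (- r); split; auto; lra.
Qed.

Definition epsk (k : nat) : R := / INR (S k).

Lemma epsk_pos k : 0 < epsk k.
Proof. unfold epsk; apply Rinv_0_lt_compat, lt_0_INR; lia. Qed.

Lemma epsk_small d : 0 < d -> exists N, forall k, (N <= k)%nat -> epsk k < d.
Proof.
  intros H. destruct (archimed_cor1 d H) as [N [H1 H2]]. exists N. intros k Hk.
  eapply Rle_lt_trans; [|exact H1]. unfold epsk.
  apply Rinv_le_contravar; [apply lt_0_INR; lia | apply le_INR; lia].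
Qed.

Lemma epsk_cv : Un_cv epsk 0.
Proof.
  intros e He. destruct (epsk_small e He) as [N HN]. exists N. intros k Hk. unfold R_dist.
  rewrite Rminus_0_r, Rabs_right by (left; apply epsk_pos). apply HN; lia.
Qed.

Lemma eq0_of_sq_le_epsk x K : 0 <= K -> (forall k, x * x <= K * epsk k) -> x = 0.
Proof.
  intros HK H. apply NNPP; intro Hx. assert (Hxx : 0 < x * x) by nra.
  destruct (epsk_small (x * x / (K + 1))) as [N HN]; [apply Rdiv_lt_0_compat; lra|].
  specialize (HN N (le_n N)). specialize (H N). pose proof (epsk_pos N).
  apply (Rmult_lt_compat_r (K + 1)) in HN; [|lra].
  replace (x * x / (K + 1) * (K + 1)) with (x * x) in HN by (field; lra). nra.
Qed.

Lemma cv_const a : Un_cv (fun _ => a) a.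
Proof. intros e He. exists 0%nat. intros. unfold R_dist. rewrite Rminus_diag, Rabs_R0; lra. Qed.

Lemma cv_scal K u l : Un_cv u l -> Un_cv (fun k => K * u k) (K * l).
Proof. intros H. apply (CV_mult (fun _ => K) u); auto. apply cv_const. Qed.

Definition normal_contraction (rho : R -> R) : Prop :=
  (forall a a', (rho a - rho a') * (rho a - rho a') <= (a - a') * (a - a')) /\
  (forall a, rho a * rho a <= a * a).

Definition clip (n a : R) : R := Rmax (- n) (Rmin n a).

Lemma clip_id n a : - n <= a <= n -> clip n a = a.
Proof. intros; unfold clip, Rmax, Rmin; repeat destruct Rle_dec; lra. Qed.

Lemma clip_bound n a : 0 <= n -> - n <= clip n a <= n.
Proof. intros; unfold clip, Rmax, Rmin; repeat destruct Rle_dec; lra. Qed.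

Lemma clip_incr n a a' : a' <= a -> 0 <= clip n a - clip n a' <= a - a'.
Proof. intros; unfold clip, Rmax, Rmin; repeat destruct Rle_dec; lra. Qed.

Lemma normal_contraction_clip n : 0 <= n -> normal_contraction (clip n).
Proof.
  intros Hn; split.
  - intros a a'. destruct (Rle_dec a' a) as [H|H];
      [pose proof (clip_incr n a a' H) | pose proof (clip_incr n a' a ltac:(lra))]; nra.
  - intros a. unfold clip, Rmax, Rmin; repeat destruct Rle_dec; nra.
Qed.

Lemma normal_contraction_clip_rest n : 0 <= n -> normal_contraction (fun a => a - clip n a).
Proof.
  intros Hn; split.
  - intros a a'. destruct (Rle_dec a' a) as [H|H];
      [pose proof (clip_incr n a a' H) | pose proof (clip_incr n a' a ltac:(lra))]; nra.
  - intros a. unfold clip, Rmax, Rmin; repeat destruct Rle_dec; nra.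
Qed.

(** * The energy form of a graph *)

Lemma sqrt_mul_sqrt_mul B u v : 0 <= B -> sqrt B * u * (sqrt B * v) = B * u * v.
Proof.
  intros H. replace (sqrt B * u * (sqrt B * v)) with (sqrt B * sqrt B * u * v) by ring.
  rewrite sqrt_sqrt; auto.
Qed.

Section Graph.
Context {V : Type} (m : V -> R) (b : V -> V -> R) (c : V -> R).
Hypothesis m_pos : forall x, 0 < m x.
Hypothesis c_ge0 : forall x, 0 <= c x.
Hypothesis b_ge0 : forall x y, 0 <= b x y.
Hypothesis b_sym : forall x y, b x y = b y x.
Hypothesis b_summable : forall x, summable (b x).

(* Summed over ordered pairs (x, y) and vertices x, the squares give Q^(N)(f) + ||f||^2. *)
Definition energy_coords (f : V -> R) (i : (V * V) + V) : R :=
  match i with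
  | inl p => sqrt (b (fst p) (snd p) / 2) * (f (fst p) - f (snd p))
  | inr x => sqrt (c x + m x) * f x
  end.

Definition DQR (f : V -> R) : Prop := sq_summable (energy_coords f).
Definition form_ip (f g : V -> R) : R := ip (energy_coords f) (energy_coords g).
Definition form_norm2 (f : V -> R) : R := form_ip f f.

Definition finite_support (phi : V -> R) : Prop := exists l, forall x, ~ In x l -> phi x = 0.

Definition approximable (f : V -> R) : Prop :=
  forall eps, 0 < eps -> exists phi, finite_support phi /\ form_norm2 (fun x => f x - phi x) < eps.

Definition real_solution (f : V -> R) : Prop :=
  forall x, exists s, has_sum (fun y => b x y * (f x - f y)) s /\ s + (c x + m x) * f x = 0.

Definition delta (a : V) (x : V) : R := if excluded_middle_informative (x = a) then 1 else 0.

Lemma half_b_ge0 x y : 0 <= b x y / 2.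
Proof. specialize (b_ge0 x y); lra. Qed.

Lemma c_plus_m_ge0 x : 0 <= c x + m x.
Proof. specialize (c_ge0 x); specialize (m_pos x); lra. Qed.

Lemma energy_coords_comb f g p q :
  energy_coords (fun x => p * f x + q * g x) = fun i => p * energy_coords f i + q * energy_coords g i.
Proof. apply functional_extensionality; intros [[x y]|x]; simpl; ring. Qed.

Lemma energy_coords_zero : energy_coords (fun _ => 0) = fun _ => 0.
Proof. apply functional_extensionality; intros [[x y]|x]; simpl; ring. Qed.

Lemma DQR_comb f g p q : DQR f -> DQR g -> DQR (fun x => p * f x + q * g x).
Proof. unfold DQR; intros; rewrite energy_coords_comb; apply sq_summable_comb; auto. Qed.

Lemma DQR_minus f g : DQR f -> DQR g -> DQR (fun x => f x - g x).
Proof.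
  intros Hf Hg. replace (fun x => f x - g x) with (fun x => 1 * f x + -1 * g x)
    by (apply functional_extensionality; intros; ring).
  apply DQR_comb; auto.
Qed.

Lemma DQR_zero : DQR (fun _ => 0).
Proof. unfold DQR. rewrite energy_coords_zero. apply sq_summable_zero. Qed.

Lemma form_ip_linl f g h p q : DQR f -> DQR g -> DQR h ->
  form_ip (fun x => p * f x + q * g x) h = p * form_ip f h + q * form_ip g h.
Proof. intros; unfold form_ip; rewrite energy_coords_comb; apply ip_linl; auto. Qed.

Lemma form_ip_linr f g h p q : DQR f -> DQR g -> DQR h ->
  form_ip h (fun x => p * f x + q * g x) = p * form_ip h f + q * form_ip h g.
Proof. intros; unfold form_ip; rewrite energy_coords_comb; apply ip_linr; auto. Qed.

Lemma form_ip_minusr f g h : DQR f -> DQR g -> DQR h ->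
  form_ip h (fun x => f x - g x) = form_ip h f - form_ip h g.
Proof.
  intros. replace (fun x => f x - g x) with (fun x => 1 * f x + -1 * g x)
    by (apply functional_extensionality; intros; ring).
  rewrite form_ip_linr by auto. ring.
Qed.

Lemma form_cauchy_schwarz f g : DQR f -> DQR g -> form_ip f g * form_ip f g <= form_norm2 f * form_norm2 g.
Proof. apply cauchy_schwarz. Qed.

Lemma form_norm2_comb f g p q : DQR f -> DQR g ->
  form_norm2 (fun x => p * f x + q * g x)
  = p * p * form_norm2 f + 2 * p * q * form_ip f g + q * q * form_norm2 g.
Proof.
  intros; unfold form_norm2, form_ip; rewrite energy_coords_comb, ip_comb by auto. ring.
Qed.

Lemma form_norm2_ge0 f : 0 <= form_norm2 f.
Proof. apply ip_ge0. Qed.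

Lemma form_norm2_point g x : DQR g -> m x * (g x * g x) <= form_norm2 g.
Proof.
  intros Hg. unfold form_norm2, form_ip, ip.
  eapply Rle_trans; [|apply (fsum_le_sum_val _ [inr x]); [intros; apply Rle_0_sqr | exact Hg |]].
  - simpl. rewrite sqrt_mul_sqrt_mul by apply c_plus_m_ge0.
    specialize (c_ge0 x). pose proof (Rle_0_sqr (g x)); unfold Rsqr in *. nra.
  - repeat constructor; simpl; tauto.
Qed.

(* Discrete Green formula: [s + (c a + m a) * f a] is [m a * ((L~ + 1) f) a]. *)
Lemma has_sum_coords_delta f a s : has_sum (fun y => b a y * (f a - f y)) s ->
  has_sum (fun i => energy_coords f i * energy_coords (delta a) i) (s + (c a + m a) * f a).
Proof.
  intros Hs. set (h := fun y => / 2 * (b a y * (f a - f y))).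
  assert (Hh : has_sum h (/2 * s)) by (apply has_sum_scal; auto).
  set (eqd := fun x => excluded_middle_informative (x = a)).
  set (P1 := fun i : (V*V)+V => match i with inl p => if eqd (fst p) then h (snd p) else 0 | inr _ => 0 end).
  set (P2 := fun i : (V*V)+V => match i with inl p => if eqd (snd p) then h (fst p) else 0 | inr _ => 0 end).
  set (P3 := fun i : (V*V)+V => match i with inl p => 0 | inr x => if eqd x then (c a + m a) * f a else 0 end).
  assert (H1 : has_sum P1 (/2 * s)).
  { apply (has_sum_reindex (fun y => inl (a, y))); [intros x y H; injection H; auto | |].
    - intros [[x y]|x] Hn; simpl; auto. destruct (eqd x); auto. subst. exfalso; eauto.
    - eapply has_sum_ext; [|exact Hh]. intros y; simpl. destruct (eqd a); tauto. }
  assert (H2 : has_sum P2 (/2 * s)).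
  { apply (has_sum_reindex (fun x => inl (x, a))); [intros x y H; injection H; auto | |].
    - intros [[x y]|x] Hn; simpl; auto. destruct (eqd y); auto. subst. exfalso; eauto.
    - eapply has_sum_ext; [|exact Hh]. intros y; simpl. destruct (eqd a); tauto. }
  assert (H3 : has_sum P3 ((c a + m a) * f a)).
  { replace ((c a + m a) * f a) with (fsum P3 [inr a]).
    - apply has_sum_finite_support; [repeat constructor; simpl; tauto|].
      intros [p|x] Hn; simpl; auto. destruct (eqd x); auto. subst. exfalso; apply Hn; simpl; auto.
    - simpl. destruct (eqd a); [ring | tauto]. }
  replace (s + (c a + m a) * f a) with (/2 * s + /2 * s + (c a + m a) * f a) by field.
  eapply has_sum_ext; [|apply has_sum_plus; [apply has_sum_plus; [exact H1 | exact H2] | exact H3]].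
  intros [[x y]|x]; simpl; unfold delta.
  - fold (eqd x) (eqd y). unfold h. rewrite sqrt_mul_sqrt_mul by apply half_b_ge0.
    destruct (eqd x) as [->|Hx]; destruct (eqd y) as [->|Hy]; try field.
    rewrite (b_sym x a); field.
  - fold (eqd x). rewrite sqrt_mul_sqrt_mul by apply c_plus_m_ge0. destruct (eqd x) as [->|]; field.
Qed.

Lemma form_ip_delta f a s : has_sum (fun y => b a y * (f a - f y)) s ->
  form_ip f (delta a) = s + (c a + m a) * f a.
Proof. intros Hs. apply sum_val_eq, has_sum_coords_delta; auto. Qed.

Lemma DQR_delta a : DQR (delta a).
Proof.
  destruct (summable_dom (b a) (fun y => b a y * (delta a a - delta a y))) as [s Hs]; auto.
  { intros y. unfold delta.
    destruct excluded_middle_informative; [|tauto]. specialize (b_ge0 a y).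
    destruct excluded_middle_informative;
      [rewrite Rminus_diag, Rmult_0_r, Rabs_R0 | rewrite Rminus_0_r, Rmult_1_r, Rabs_right]; lra. }
  exists (s + (c a + m a) * delta a a). apply has_sum_coords_delta; auto.
Qed.

Lemma finite_support_comb p q f g :
  finite_support f -> finite_support g -> finite_support (fun x => p * f x + q * g x).
Proof.
  intros [l1 H1] [l2 H2]. exists (l1 ++ l2). intros x Hx.
  rewrite H1, H2 by (intro; apply Hx, in_or_app; auto). ring.
Qed.

Lemma finite_support_delta a : finite_support (delta a).
Proof.
  exists [a]. intros y Hy. unfold delta.
  destruct excluded_middle_informative; auto. subst; simpl in Hy; tauto.
Qed.

Lemma finite_support_ind (P : (V -> R) -> Prop) : P (fun _ => 0) ->
  (forall g a p, P g -> P (fun x => p * delta a x + 1 * g x)) ->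
  forall phi, finite_support phi -> P phi.
Proof.
  intros H0 HS phi [l Hl]. revert phi Hl. induction l as [|a l IH]; intros phi Hl.
  - replace phi with (fun _ : V => 0); auto.
    apply functional_extensionality; intros x; symmetry; apply Hl; simpl; auto.
  - set (g := fun x => if excluded_middle_informative (x = a) then 0 else phi x).
    replace phi with (fun x => phi a * delta a x + 1 * g x).
    + apply HS, IH. intros x Hx. unfold g. destruct excluded_middle_informative; auto.
      apply Hl. simpl. intros [->|H]; auto.
    + apply functional_extensionality; intros x. unfold g, delta.
      destruct excluded_middle_informative as [->|]; ring.
Qed.

Lemma DQR_finite_support phi : finite_support phi -> DQR phi.
Proof.
  apply finite_support_ind; [apply DQR_zero|]. intros g a p Hg. apply DQR_comb; auto. apply DQR_delta.
Qed.

Lemma form_ip_solution_finite_support f phi : DQR f -> real_solution f ->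
  finite_support phi -> form_ip f phi = 0.
Proof.
  intros Hf Hsol Hphi. cut (DQR phi /\ form_ip f phi = 0); [tauto|]. revert phi Hphi.
  apply finite_support_ind.
  - split; [apply DQR_zero|]. unfold form_ip. rewrite energy_coords_zero. apply ip_0r.
  - intros g a p [Dg Hg]. split; [apply DQR_comb; auto; apply DQR_delta|].
    unfold form_ip. rewrite energy_coords_comb, ip_linr by (auto; apply DQR_delta).
    fold (form_ip f (delta a)) (form_ip f g). rewrite Hg.
    destruct (Hsol a) as [s [Hs He]]. rewrite (form_ip_delta f a s Hs), He. ring.
Qed.

Lemma solution_approximable_eq0 f : DQR f -> real_solution f -> approximable f -> forall x, f x = 0.
Proof.
  intros Hf Hsol Happ.
  assert (HN : form_norm2 f = 0).
  { pose proof (form_norm2_ge0 f). apply NNPP; intro Hne.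
    destruct (Happ (form_norm2 f / 2)) as [phi [Hphi Hlt]]; [lra|].
    pose proof (DQR_finite_support phi Hphi) as Dphi.
    assert (E : form_ip f (fun x => f x - phi x) = form_norm2 f).
    { rewrite form_ip_minusr, (form_ip_solution_finite_support f phi) by auto.
      unfold form_norm2; ring. }
    pose proof (form_cauchy_schwarz f (fun x => f x - phi x) Hf (DQR_minus _ _ Hf Dphi)) as Hcs.
    rewrite E in Hcs. pose proof (form_norm2_ge0 (fun x => f x - phi x)). nra. }
  intros x. pose proof (form_norm2_point f x Hf) as Hx. rewrite HN in Hx.
  pose proof (m_pos x). pose proof (Rle_0_sqr (f x)). unfold Rsqr in *.
  assert (f x * f x = 0) by nra. nra.
Qed.

Lemma DQR_dominated (w : V -> Cplx) s1 s2 s3 (g : V -> R) :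
  (forall x, g x * g x <= Cnorm2 (w x)) ->
  (forall x y, (g x - g y) * (g x - g y) <= Cnorm2 (Csub (w x) (w y))) ->
  has_sum (edge_energy b w) s1 -> has_sum (pot_energy c w) s2 ->
  has_sum (fun x => Cnorm2 (w x) * m x) s3 -> DQR g /\ form_norm2 g <= 1/2 * s1 + s2 + s3.
Proof.
  intros H1 H2 E1 E2 E3.
  set (H := fun i : (V*V)+V => match i with
            | inl p => /2 * edge_energy b w p
            | inr x => pot_energy c w x + Cnorm2 (w x) * m x end).
  assert (HH : has_sum H (/2 * s1 + (s2 + s3))).
  { apply has_sum_sum_type; [apply has_sum_scal | apply has_sum_plus]; auto. }
  assert (Hdom : forall i, 0 <= energy_coords g i * energy_coords g i <= H i).
  { intros [[x y]|x]; simpl; split; try apply Rle_0_sqr.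
    - rewrite sqrt_mul_sqrt_mul by apply half_b_ge0. unfold edge_energy; simpl.
      specialize (H2 x y); specialize (b_ge0 x y). nra.
    - rewrite sqrt_mul_sqrt_mul by apply c_plus_m_ge0. unfold pot_energy.
      specialize (H1 x); specialize (c_ge0 x); specialize (m_pos x). nra. }
  assert (HD : DQR g) by (eapply summable_dom_ge0; [exact Hdom | exists (/2 * s1 + (s2 + s3)); auto]).
  split; auto. unfold form_norm2, form_ip, ip.
  assert (sum_val (fun i => energy_coords g i * energy_coords g i) <= /2 * s1 + (s2 + s3))
    by (eapply has_sum_le; [|apply has_sum_val; exact HD | exact HH]; intros; apply Hdom).
  lra.
Qed.

Lemma form_sums_of_parts f g : DQR f -> DQR g -> exists s1 s2 s3,
  has_sum (edge_energy b (fun x => (f x, g x))) s1 /\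
  has_sum (pot_energy c (fun x => (f x, g x))) s2 /\
  has_sum (fun x => Cnorm2 (f x, g x) * m x) s3 /\ 1/2 * s1 + s2 + s3 = form_norm2 f + form_norm2 g.
Proof.
  intros Hf Hg.
  set (A := fun i => energy_coords f i * energy_coords f i + energy_coords g i * energy_coords g i).
  assert (HA : has_sum A (form_norm2 f + form_norm2 g)) by (apply has_sum_plus; apply has_sum_val; auto).
  assert (A_ge0 : forall i, 0 <= A i)
    by (intros i; unfold A; pose proof (Rle_0_sqr (energy_coords f i));
        pose proof (Rle_0_sqr (energy_coords g i)); unfold Rsqr in *; lra).
  destruct (has_sum_sum_type_split A _ A_ge0 HA) as [a1 [a2 [Ha1 [Ha2 Hs]]]].
  assert (Hr : forall x, A (inr x) = (c x + m x) * Cnorm2 (f x, g x)).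
  { intros x; unfold A, Cnorm2; simpl. rewrite !sqrt_mul_sqrt_mul by apply c_plus_m_ge0. ring. }
  assert (Hdom : forall x, 0 <= pot_energy c (fun x => (f x, g x)) x <= A (inr x) /\
                          0 <= Cnorm2 (f x, g x) * m x <= A (inr x)).
  { intros x. rewrite Hr. unfold pot_energy, Cnorm2; simpl.
    specialize (c_ge0 x); specialize (m_pos x).
    pose proof (Rle_0_sqr (f x)); pose proof (Rle_0_sqr (g x)); unfold Rsqr in *; split; split; nra. }
  destruct (summable_dom_ge0 (fun x => A (inr x)) (pot_energy c (fun x => (f x, g x))))
    as [s2 E2]; [apply Hdom | exists a2; auto|].
  destruct (summable_dom_ge0 (fun x => A (inr x)) (fun x => Cnorm2 (f x, g x) * m x))
    as [s3 E3]; [apply Hdom | exists a2; auto|].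
  exists (2 * a1), s2, s3. repeat split; auto.
  - eapply has_sum_ext; [|apply has_sum_scal; exact Ha1]. intros [x y]; unfold A, edge_energy; simpl.
    rewrite !sqrt_mul_sqrt_mul by apply half_b_ge0. unfold Cnorm2, Csub; simpl. field.
  - assert (s2 + s3 = a2).
    { eapply has_sum_unique; [apply has_sum_plus; [exact E2 | exact E3]|].
      eapply has_sum_ext; [|exact Ha2]. intros x; cbv beta. rewrite Hr. unfold pot_energy. ring. }
    lra.
Qed.

Ltac Cnorm2_part := intros; unfold Cnorm2, Csub; simpl;
  first [ match goal with |- _ <= _ + ?t * ?t => pose proof (Rle_0_sqr t); unfold Rsqr in *; lra end
        | match goal with |- _ <= ?t * ?t + _ => pose proof (Rle_0_sqr t); unfold Rsqr in *; lra end ].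

Lemma DQN_parts u : DQN m b c u -> DQR (fun x => fst (u x)) /\ DQR (fun x => snd (u x)).
Proof.
  intros [[s3 E3] [[s1 E1] [s2 E2]]].
  split; eapply DQR_dominated; eauto; Cnorm2_part.
Qed.

Lemma DQD_parts_approximable u : DQD m b c u ->
  approximable (fun x => fst (u x)) /\ approximable (fun x => snd (u x)).
Proof.
  intros [_ H]. split; intros eps He;
    destruct (H eps He) as [phi [[l Hl] [s1 [s2 [s3 [E1 [E2 [E3 Hlt]]]]]]]].
  - exists (fun x => fst (phi x)). split.
    + exists l. intros x Hx. rewrite Hl; auto.
    + edestruct (DQR_dominated (fun x => Csub (u x) (phi x)) s1 s2 s3 (fun x => fst (u x) - fst (phi x))); eauto;
        [Cnorm2_part | Cnorm2_part | lra].
  - exists (fun x => snd (phi x)). split.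
    + exists l. intros x Hx. rewrite Hl; auto.
    + edestruct (DQR_dominated (fun x => Csub (u x) (phi x)) s1 s2 s3 (fun x => snd (u x) - snd (phi x))); eauto;
        [Cnorm2_part | Cnorm2_part | lra].
Qed.

Lemma DQD_of_parts_approximable u : DQN m b c u ->
  approximable (fun x => fst (u x)) -> approximable (fun x => snd (u x)) -> DQD m b c u.
Proof.
  intros HN H1 H2. split; auto. intros eps He.
  destruct (DQN_parts u HN) as [D1 D2].
  destruct (H1 (eps/2)) as [p1 [F1 N1]]; [lra|].
  destruct (H2 (eps/2)) as [p2 [F2 N2]]; [lra|].
  exists (fun x => (p1 x, p2 x)). split.
  - destruct F1 as [l1 F1], F2 as [l2 F2]. exists (l1 ++ l2). intros x Hx.
    rewrite F1, F2; auto; intro; apply Hx, in_or_app; auto.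
  - destruct (form_sums_of_parts (fun x => fst (u x) - p1 x) (fun x => snd (u x) - p2 x))
      as [s1 [s2 [s3 [E1 [E2 [E3 Hs]]]]]]; try (apply DQR_minus, DQR_finite_support; auto).
    exists s1, s2, s3. repeat split; auto. lra.
Qed.

Lemma energy_coords_contraction rho g i : normal_contraction rho ->
  0 <= energy_coords (fun x => rho (g x)) i * energy_coords (fun x => rho (g x)) i
    <= energy_coords g i * energy_coords g i.
Proof.
  intros [H1 H2]. split; [apply Rle_0_sqr|]. destruct i as [[x y]|x]; simpl.
  - rewrite !sqrt_mul_sqrt_mul by apply half_b_ge0.
    specialize (b_ge0 x y); specialize (H1 (g x) (g y)). nra.
  - rewrite !sqrt_mul_sqrt_mul by apply c_plus_m_ge0.
    pose proof (c_plus_m_ge0 x); specialize (H2 (g x)). nra.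
Qed.

Lemma DQR_contraction rho g : normal_contraction rho -> DQR g ->
  DQR (fun x => rho (g x)) /\ form_norm2 (fun x => rho (g x)) <= form_norm2 g.
Proof.
  intros Hrho Hg.
  assert (D : DQR (fun x => rho (g x))).
  { eapply summable_dom_ge0; [|exact Hg]. intros i; apply energy_coords_contraction; auto. }
  split; auto. apply sum_val_le; auto. intros i; apply energy_coords_contraction; auto.
Qed.

(* All but [eps] of the energy of [v] lives on finitely many edges and vertices; clipping at a level
   above the values of [v] there leaves a remainder of energy below [eps]. *)
Lemma clip_rest_small v eps : DQR v -> 0 < eps ->
  exists n, 0 <= n /\ form_norm2 (fun x => v x - clip n (v x)) < eps.
Proof.
  intros Hv He.
  set (A := fun i => energy_coords v i * energy_coords v i).
  destruct (has_sum_val A Hv eps He) as [l0 [Hl0 Hl0']].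
  specialize (Hl0' l0 Hl0 (incl_refl _)).
  set (vmax := fun i : (V*V)+V => match i with
               | inl p => Rabs (v (fst p)) + Rabs (v (snd p))
               | inr x => Rabs (v x) end).
  assert (Hvmax : forall i, 0 <= vmax i).
  { intros [p|x]; simpl; [pose proof (Rabs_pos (v (fst p))); pose proof (Rabs_pos (v (snd p))); lra
                         | apply Rabs_pos]. }
  set (n := fsum vmax l0). exists n.
  assert (Hn : 0 <= n) by (apply fsum_ge0; auto).
  split; auto.
  set (h := fun x => v x - clip n (v x)).
  assert (Hh : DQR h) by (apply (DQR_contraction (fun a => a - clip n a)); auto;
                          apply normal_contraction_clip_rest; auto).
  assert (Hr : forall x, Rabs (v x) <= n -> h x = 0).
  { intros x Hx. unfold h. rewrite clip_id; [ring|]. revert Hx; split_Rabs; intros; split; lra. }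
  assert (Hz : forall i, In i l0 -> energy_coords h i = 0).
  { intros i Hi. assert (Hle := fsum_ge_term vmax l0 i Hvmax Hi). fold n in Hle.
    destruct i as [[x y]|x]; simpl in *.
    - pose proof (Rabs_pos (v x)); pose proof (Rabs_pos (v y)). rewrite (Hr x), (Hr y) by lra. ring.
    - rewrite (Hr x) by lra. ring. }
  assert (Hnn : forall i, 0 <= energy_coords h i * energy_coords h i) by (intros; apply Rle_0_sqr).
  assert (Hhb : form_norm2 h <= sum_val A - fsum A l0).
  { apply (has_sum_le_fsum_bound _ _ _ (has_sum_val _ Hh)).
    intros l Hl. destruct (NoDup_cover2 l l0) as [l' [Hl' [H1 H2]]].
    destruct (NoDup_incl_perm_app l0 l' Hl0 Hl' H2) as [r Hperm].
    assert (X1 := fsum_le_incl _ l l' Hnn Hl Hl' H1).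
    assert (X3 := fsum_le_sum_val A l' (fun i => Rle_0_sqr _) Hv Hl').
    rewrite (fsum_perm _ _ _ Hperm), fsum_app in X1. rewrite (fsum_perm _ _ _ Hperm), fsum_app in X3.
    rewrite (fsum_eq0 _ l0) in X1 by (intros i Hi; rewrite Hz; auto; ring).
    assert (fsum (fun i => energy_coords h i * energy_coords h i) r <= fsum A r)
      by (apply fsum_le; intros i;
          apply (energy_coords_contraction (fun a => a - clip n a)), normal_contraction_clip_rest; auto).
    lra. }
  split_Rabs; lra.
Qed.

Lemma not_approximable_clip v : DQR v -> ~ approximable v ->
  exists n, 0 <= n /\ ~ approximable (fun x => clip n (v x)).
Proof.
  intros Hv Hna. apply not_all_ex_not in Hna as [eps Hna].
  apply imply_to_and in Hna as [He Hna].
  destruct (clip_rest_small v (eps / 4) Hv ltac:(lra)) as [n [Hn Hsmall]].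
  exists n; split; auto. intros Happ.
  destruct (Happ (eps / 4) ltac:(lra)) as [phi [Hphi Hlt]].
  apply Hna. exists phi; split; auto.
  assert (Dc : DQR (fun x => clip n (v x)))
    by (apply (DQR_contraction (clip n)); auto; apply normal_contraction_clip; auto).
  assert (Dr : DQR (fun x => v x - clip n (v x))) by (apply DQR_minus; auto).
  assert (Dd : DQR (fun x => clip n (v x) - phi x)) by (apply DQR_minus, DQR_finite_support; auto).
  replace (fun x => v x - phi x)
    with (fun x => 1 * (v x - clip n (v x)) + 1 * (clip n (v x) - phi x))
    by (apply functional_extensionality; intros; ring).
  rewrite form_norm2_comb by auto.
  pose proof (form_cauchy_schwarz _ _ Dr Dd).
  pose proof (form_norm2_ge0 (fun x => v x - clip n (v x))).
  pose proof (form_norm2_ge0 (fun x => clip n (v x) - phi x)). nra.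
Qed.

Lemma finite_support_scal p f : finite_support f -> finite_support (fun x => p * f x).
Proof. intros [l H]. exists l. intros x Hx. rewrite H; auto; ring. Qed.

Lemma energy_coords_cv (g : nat -> V -> R) h : (forall x, Un_cv (fun k => g k x) (h x)) ->
  forall i, Un_cv (fun k => energy_coords (g k) i) (energy_coords h i).
Proof.
  intros Hg [[x y]|x]; simpl; apply cv_scal; [apply CV_minus|]; auto.
Qed.

Section MinimizingSequence.
Variables (f : nat -> V -> R) (d n : R).
Hypothesis f_DQR : forall k, DQR (f k).
Hypothesis f_bound : forall k x, - n <= f k x <= n.
Hypothesis f_diff : forall j k, finite_support (fun x => f j x - f k x).
Hypothesis f_min : forall k phi, finite_support phi -> d <= form_norm2 (fun x => f k x - phi x).
Hypothesis f_near : forall k, form_norm2 (f k) < d + epsk k.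
Hypothesis d_pos : 0 < d.

(* Parallelogram law against the minimality of [d] at the midpoint of [f k] and [f j]. *)
Lemma minimizing_cauchy k j : form_norm2 (fun x => f k x - f j x) <= 2 * epsk k + 2 * epsk j.
Proof.
  assert (Hmid := f_min k _ (finite_support_scal (/2) _ (f_diff k j))). cbv beta in Hmid.
  replace (fun x => f k x - / 2 * (f k x - f j x)) with (fun x => / 2 * f k x + / 2 * f j x) in Hmid
    by (apply functional_extensionality; intros; field).
  replace (fun x => f k x - f j x) with (fun x => 1 * f k x + -1 * f j x)
    by (apply functional_extensionality; intros; ring).
  rewrite form_norm2_comb in Hmid by auto. rewrite form_norm2_comb by auto.
  pose proof (f_near k); pose proof (f_near j). lra.
Qed.

Lemma minimizing_pointwise_cauchy x : Cauchy_crit (fun k => f k x).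
Proof.
  intros e He. pose proof (m_pos x) as Hmx.
  destruct (epsk_small (e * e * m x / 4)) as [N HN].
  { apply Rdiv_lt_0_compat; [apply Rmult_lt_0_compat; nra | lra]. }
  exists N. intros k j Hk Hj. unfold R_dist.
  pose proof (form_norm2_point (fun y => f k y - f j y) x (DQR_minus _ _ (f_DQR k) (f_DQR j))).
  pose proof (minimizing_cauchy k j). pose proof (HN k Hk). pose proof (HN j Hj).
  assert ((f k x - f j x) * (f k x - f j x) < e * e)
    by (apply Rmult_lt_reg_l with (m x); lra).
  apply Rabs_def1; nra.
Qed.

Lemma minimizing_pointwise_limit : exists w, forall x, Un_cv (fun k => f k x) (w x).
Proof.
  exists (fun x => proj1_sig (R_complete _ (minimizing_pointwise_cauchy x))).
  intros x. apply (proj2_sig (R_complete _ (minimizing_pointwise_cauchy x))).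
Qed.

Variable w : V -> R.
Hypothesis w_lim : forall x, Un_cv (fun k => f k x) (w x).

Lemma limit_dist j : DQR (fun x => w x - f j x) /\ form_norm2 (fun x => w x - f j x) <= 2 * epsk j.
Proof.
  apply (fatou (fun k => energy_coords (fun x => f k x - f j x)) _ (2 * epsk j)
                 (fun k => 2 * epsk k + 2 * epsk j)).
  - intros k. apply DQR_minus; auto.
  - apply energy_coords_cv. intros x. apply CV_minus; auto. apply cv_const.
  - intros k; apply (minimizing_cauchy k j).
  - pose proof (CV_plus _ _ _ _ (cv_scal 2 _ _ epsk_cv) (cv_const (2 * epsk j))) as C.
    rewrite Rmult_0_r, Rplus_0_l in C. exact C.
Qed.

Lemma limit_DQR : DQR w.
Proof.
  replace w with (fun x => 1 * (w x - f 0%nat x) + 1 * f 0%nat x)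
    by (apply functional_extensionality; intros; ring).
  apply DQR_comb; auto. apply limit_dist.
Qed.

Lemma limit_bound x : - n <= w x <= n.
Proof.
  split.
  - apply Rle_cv_lim with (Un := fun _ => - n) (Vn := fun k => f k x); [intros k; apply f_bound | apply cv_const | auto].
  - apply Rle_cv_lim with (Un := fun k => f k x) (Vn := fun _ => n); [intros k; apply f_bound | auto | apply cv_const].
Qed.

Lemma limit_nonzero : exists x, w x <> 0.
Proof.
  apply NNPP; intro Hz.
  assert (Hz' : forall x, w x = 0) by (intros x; apply NNPP; intro; apply Hz; eauto).
  destruct (epsk_small (d / 2)) as [N HN]; [lra|]. specialize (HN N (le_n N)).
  assert (Hd := f_min N _ (finite_support_scal 0 _ (f_diff N N))). cbv beta in Hd.
  replace (fun x => f N x - 0 * (f N x - f N x)) with (fun x => -1 * (w x - f N x) + 0 * (w x - f N x))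
    in Hd by (apply functional_extensionality; intros; rewrite Hz'; ring).
  destruct (limit_dist N) as [D HN2]. rewrite form_norm2_comb in Hd by auto. lra.
Qed.

(* The minimality of [d] along the lines [f j - t psi] forces [form_ip (f j) psi] to be of order
   [sqrt (epsk j)]. *)
Lemma limit_orth psi : finite_support psi -> form_ip w psi = 0.
Proof.
  intros Hpsi. pose proof (DQR_finite_support psi Hpsi) as Dpsi.
  set (B := form_norm2 psi). assert (HB : 0 <= B) by apply form_norm2_ge0.
  apply (eq0_of_sq_le_epsk _ (6 * B)); [lra|]. intros j.
  set (p := form_ip (f j) psi). set (q := form_ip (fun x => w x - f j x) psi).
  assert (Hp : p * p <= epsk j * B).
  { apply discriminant_le; auto. intros t.
    assert (Ht := f_min j _ (finite_support_scal t _ Hpsi)). cbv beta in Ht.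
    replace (fun x => f j x - t * psi x) with (fun x => 1 * f j x + - t * psi x) in Ht
      by (apply functional_extensionality; intros; ring).
    rewrite form_norm2_comb in Ht by auto. pose proof (f_near j). fold p B in Ht. nra. }
  destruct (limit_dist j) as [Dj Nj].
  assert (Hq : q * q <= 2 * epsk j * B).
  { eapply Rle_trans; [apply form_cauchy_schwarz; auto|]. apply Rmult_le_compat_r; auto. }
  replace (form_ip w psi) with (p + q).
  - pose proof (Rle_0_sqr (p - q)). unfold Rsqr in *. nra.
  - transitivity (form_ip (fun x => 1 * f j x + 1 * (w x - f j x)) psi).
    + rewrite form_ip_linl by auto. unfold p, q; ring.
    + f_equal. apply functional_extensionality; intros; ring.
Qed.

End MinimizingSequence.

(* Clipping [v - phi] at the level [n >= |v|] keeps it an approximation error by a finitely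
   supported function (outside the support of [phi] nothing changes) and lowers its energy. *)
Lemma bounded_approx_error v n phi : DQR v -> 0 <= n -> (forall x, - n <= v x <= n) ->
  finite_support phi -> exists phi', finite_support phi' /\
    form_norm2 (fun x => v x - phi' x) <= form_norm2 (fun x => v x - phi x) /\
    forall x, - n <= v x - phi' x <= n.
Proof.
  intros Hv Hn Hvb Hphi. exists (fun x => v x - clip n (v x - phi x)). repeat split.
  - destruct Hphi as [l Hl]. exists l. intros x Hx. rewrite Hl, Rminus_0_r, clip_id; auto. ring.
  - replace (fun x => v x - (v x - clip n (v x - phi x))) with (fun x => clip n (v x - phi x))
      by (apply functional_extensionality; intros; ring).
    apply (DQR_contraction (clip n)); [apply normal_contraction_clip; auto|].
    apply DQR_minus, DQR_finite_support; auto.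
  - replace (v x - (v x - clip n (v x - phi x))) with (clip n (v x - phi x)) by ring.
    apply clip_bound; auto.
  - replace (v x - (v x - clip n (v x - phi x))) with (clip n (v x - phi x)) by ring.
    apply clip_bound; auto.
Qed.

Lemma bounded_minimizing_sequence v n : DQR v -> 0 <= n -> (forall x, - n <= v x <= n) ->
  ~ approximable v -> exists (d : R) (f : nat -> V -> R), 0 < d /\
    (forall k, DQR (f k)) /\ (forall k x, - n <= f k x <= n) /\
    (forall j k, finite_support (fun x => f j x - f k x)) /\
    (forall k psi, finite_support psi -> d <= form_norm2 (fun x => f k x - psi x)) /\
    (forall k, form_norm2 (f k) < d + epsk k).
Proof.
  intros Hv Hn Hvb Hna.
  destruct (exists_inf_ge0 (fun r => exists phi, finite_support phi /\ r = form_norm2 (fun x => v x - phi x)))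
    as [d [Hlow Happ]].
  { exists (form_norm2 (fun x => v x - 0)), (fun _ => 0). split; auto. exists []; auto. }
  { intros r [phi [_ ->]]. apply form_norm2_ge0. }
  assert (Hd : 0 < d).
  { apply Rnot_le_lt; intro Hd. apply Hna. intros eps He.
    destruct (Happ eps He) as [r [[phi [Hphi ->]] Hr]]. exists phi; split; auto; lra. }
  assert (Hseq : forall k, exists phi, finite_support phi /\
            form_norm2 (fun x => v x - phi x) < d + epsk k /\ forall x, - n <= v x - phi x <= n).
  { intros k. destruct (Happ (epsk k) (epsk_pos k)) as [r [[phi [Hphi ->]] Hr]].
    destruct (bounded_approx_error v n phi) as [phi' [H1 [H2 H3]]]; auto.
    exists phi'; split; [auto | split; [lra | exact H3]]. }
  set (phi := fun k => proj1_sig (constructive_indefinite_description _ (Hseq k))).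
  assert (Hphi : forall k, finite_support (phi k) /\
            form_norm2 (fun x => v x - phi k x) < d + epsk k /\ forall x, - n <= v x - phi k x <= n)
    by (intros k; apply (proj2_sig (constructive_indefinite_description _ (Hseq k)))).
  clearbody phi.
  exists d, (fun k x => v x - phi k x). split; [|split; [|split; [|split; [|split]]]]; auto.
  - intros k; apply DQR_minus, DQR_finite_support, Hphi; auto.
  - intros k; apply Hphi.
  - intros j k. replace (fun x => v x - phi j x - (v x - phi k x)) with (fun x => 1 * phi k x + -1 * phi j x)
      by (apply functional_extensionality; intros; ring).
    apply finite_support_comb; apply Hphi.
  - intros k psi Hpsi. apply Hlow. exists (fun x => 1 * phi k x + 1 * psi x). split.
    + apply finite_support_comb; auto; apply Hphi.
    + f_equal. apply functional_extensionality; intros; ring.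
  - intros k; apply Hphi.
Qed.

Lemma orth_of_not_approximable v n : DQR v -> 0 <= n -> (forall x, - n <= v x <= n) ->
  ~ approximable v -> exists w, DQR w /\ (forall x, - n <= w x <= n) /\ (exists x, w x <> 0) /\
    forall psi, finite_support psi -> form_ip w psi = 0.
Proof.
  intros Hv Hn Hvb Hna.
  destruct (bounded_minimizing_sequence v n Hv Hn Hvb Hna)
    as [d [f [Hd [f_DQR [f_bound [f_diff [f_min f_near]]]]]]].
  destruct (minimizing_pointwise_limit f d) as [w Hw]; auto.
  exists w. split; [|split; [|split]].
  - eapply limit_DQR; eauto.
  - eapply limit_bound; eauto.
  - eapply limit_nonzero; eauto.
  - intros psi. eapply limit_orth; eauto.
Qed.

Lemma real_solution_of_orth w n : DQR w -> (forall x, - n <= w x <= n) ->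
  (forall psi, finite_support psi -> form_ip w psi = 0) -> real_solution w.
Proof.
  intros Dw Hwb Horth x.
  destruct (summable_dom (fun y => 2 * n * b x y) (fun y => b x y * (w x - w y))) as [s Hs].
  { intros y. rewrite Rabs_mult, (Rabs_right (b x y)) by (apply Rle_ge; auto).
    pose proof (Hwb x); pose proof (Hwb y); pose proof (b_ge0 x y).
    assert (Rabs (w x - w y) <= 2 * n) by (split_Rabs; lra). pose proof (Rabs_pos (w x - w y)). nra. }
  { apply summable_scal; auto. }
  exists s. split; auto. rewrite <- (form_ip_delta w x s Hs). apply Horth, finite_support_delta.
Qed.

Lemma div_plus_eq0_iff s cx mx ux : 0 < mx ->
  (s + cx * ux) / mx + ux = 0 <-> s + (cx + mx) * ux = 0.
Proof.
  intros Hmx. replace ((s + cx * ux) / mx + ux) with ((s + (cx + mx) * ux) / mx) by (field; lra).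
  split; intros H.
  - apply (Rmult_eq_compat_l mx) in H. field_simplify in H; lra.
  - rewrite H. unfold Rdiv; ring.
Qed.

Lemma real_solution_parts u : Lt_plus1_zero m b c u ->
  real_solution (fun x => fst (u x)) /\ real_solution (fun x => snd (u x)).
Proof.
  intros [_ Heq]. split; intros x; destruct (Heq x) as [sr [si [Hr [Hi [Er Ei]]]]].
  - exists sr. split; auto. apply div_plus_eq0_iff; auto.
  - exists si. split; auto. apply div_plus_eq0_iff; auto.
Qed.

Lemma complex_solution_of_real w n : DQR w -> (forall x, - n <= w x <= n) -> real_solution w ->
  DQN m b c (fun x => (w x, 0)) /\ in_linfty (fun x => (w x, 0)) /\ Lt_plus1_zero m b c (fun x => (w x, 0)).
Proof.
  intros Dw Hwb Hsol.
  assert (Cab : forall x, Cabs (w x, 0) <= Rabs n).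
  { intros x. unfold Cabs, Cnorm2; simpl. rewrite <- sqrt_Rsqr_abs. apply sqrt_le_1_alt.
    specialize (Hwb x). unfold Rsqr. nra. }
  destruct (form_sums_of_parts w (fun _ => 0) Dw DQR_zero) as [s1 [s2 [s3 [E1 [E2 [E3 _]]]]]].
  split; [|split; [exists (Rabs n); auto|split]].
  - split; [exists s3 | split; [exists s1 | exists s2]]; auto.
  - intros x. apply summable_dom with (fun y => Rabs n * b x y); [|apply summable_scal; auto].
    intros y. pose proof (b_ge0 x y). pose proof (Cab y). pose proof (sqrt_pos (Cnorm2 (w y, 0))).
    rewrite Rabs_mult, Rabs_Rabsolu, (Rabs_right (Cabs _)), (Rabs_right (b x y)) by (apply Rle_ge; auto).
    unfold Cabs in *. nra.
  - intros x. destruct (Hsol x) as [sr [Hsr Er]]. exists sr, 0. simpl. repeat split; auto.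
    + eapply has_sum_ext; [|apply has_sum_zero]. intros; simpl; ring.
    + apply div_plus_eq0_iff; auto.
    + unfold Rdiv; ring.
Qed.

Lemma not_DQD_of_solution u : DQN m b c u -> not_identically_zero u -> Lt_plus1_zero m b c u ->
  ~ DQD m b c u.
Proof.
  intros HN [x0 Hx0] Hsol HD. apply Hx0.
  destruct (DQN_parts u HN) as [D1 D2], (DQD_parts_approximable u HD) as [A1 A2],
           (real_solution_parts u Hsol) as [S1 S2].
  rewrite (surjective_pairing (u x0)), (solution_approximable_eq0 _ D1 S1 A1 x0),
          (solution_approximable_eq0 _ D2 S2 A2 x0). reflexivity.
Qed.

Lemma bounded_solution_of_not_DQD u : DQN m b c u -> ~ DQD m b c u ->
  exists w, DQN m b c w /\ in_linfty w /\ not_identically_zero w /\ Lt_plus1_zero m b c w.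
Proof.
  intros HN HD. destruct (DQN_parts u HN) as [D1 D2].
  assert (Hv : exists v, DQR v /\ ~ approximable v).
  { apply NNPP; intro Hn. apply HD, DQD_of_parts_approximable; auto;
      apply NNPP; intro Ha; apply Hn; eauto. }
  destruct Hv as [v [Dv Hna]].
  destruct (not_approximable_clip v Dv Hna) as [n [Hn Hnc]].
  destruct (DQR_contraction (clip n) v (normal_contraction_clip n Hn) Dv) as [Dc _].
  destruct (orth_of_not_approximable _ n Dc Hn (fun x => clip_bound n _ Hn) Hnc)
    as [w [Dw [Hwb [[x0 Hx0] Horth]]]].
  destruct (complex_solution_of_real w n Dw Hwb (real_solution_of_orth w n Dw Hwb Horth))
    as [H1 [H2 H3]].
  exists (fun x => (w x, 0)). split; [|split; [|split]]; auto.
  exists x0. intro H. apply Hx0. injection H; auto.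
Qed.

End Graph.

Theorem mainTheorem9
  (V : Type)
  (Vcount : exists enc : V -> nat, forall x y, enc x = enc y -> x = y)
  (m : V -> R) (Hm : forall x, 0 < m x)
  (b : V -> V -> R) (c : V -> R)
  (Hc : forall x, 0 <= c x)
  (Hb_nonneg : forall x y, 0 <= b x y)
  (Hb_diag : forall x, b x x = 0)
  (Hb_sym : forall x y, b x y = b y x)
  (Hb_sum : forall x, summable (b x)) :
  ((exists u, DQN m b c u /\ ~ DQD m b c u) <->
   (exists u, DQN m b c u /\ not_identically_zero u /\ Lt_plus1_zero m b c u)) /\
  ((exists u, DQN m b c u /\ not_identically_zero u /\ Lt_plus1_zero m b c u) <->
   (exists u, DQN m b c u /\ in_linfty u /\ not_identically_zero u /\ Lt_plus1_zero m b c u)).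
Proof.
  assert (i_iii : forall u, DQN m b c u -> ~ DQD m b c u ->
            exists w, DQN m b c w /\ in_linfty w /\ not_identically_zero w /\ Lt_plus1_zero m b c w)
    by (intros; eapply bounded_solution_of_not_DQD; eauto).
  assert (ii_i : forall u, DQN m b c u -> not_identically_zero u -> Lt_plus1_zero m b c u ->
            ~ DQD m b c u)
    by (intros; eapply not_DQD_of_solution; eauto).
  split; split.
  - intros [u [HN HD]]. destruct (i_iii u HN HD) as [w [H1 [_ H2]]]. eauto.
  - intros [u [HN [Hnz Hsol]]]. eauto.
  - intros [u [HN [Hnz Hsol]]]. apply (i_iii u HN), ii_i; auto.
  - intros [u [HN [_ Hrest]]]. eauto.
Qed.
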